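(* Let $\psi\in C([0,T]\times\overline{\mathcal O};\mathbb R)$ and let $u:[0,T]\times\overline{\mathcal O}\to\mathbb R$ be a bounded usc viscosity subsolution of $\mathrm{VI}_{\min}[\psi]$. Then $u(T,x)\le\psi(T,x)$ for all $x\in\overline{\mathcal O}$.
   Context: Standing assumptions: $\mathcal O\subset\mathbb R^d$ bounded open of class $W^{2,\infty}$ with outward normal $n$; $\gamma$ Lipschitz with $\gamma\cdot n\ge c_0>0$ on $\partial\mathcal O$; $b,\sigma$ continuous on $[0,T]\times\overline{\mathcal O}$, Lipschitz in space uniformly in time. $H(t,x,p)=\frac12|\sigma(t,x)^Tp|^2-b(t,x)\cdot p$. $\mathrm{VI}_{\min}[\psi]$: $\min(-\partial_tw+H(t,x,Dw),w-\psi)=0$ in $[0,T)\times\mathcal O$, $\partial w/\partial\gamma=0$ on $[0,T)\times\partial\mathcal O$, $w(T)=\psi(T)$ on $\overline{\mathcal O}$. With $E(t,x,r,q,p)=\min(-q+H(t,x,p),r-\psi(t,x))$, a bounded usc $w$ is a viscosity subsolution if for every $\varphi\in C^1([0,T]\times\overline{\mathcal O})$ and every local maximum point $(t_0,x_0)$ of $w-\varphi$, with $E_0=E(t_0,x_0,w(t_0,x_0),\partial_t\varphi(t_0,x_0),D\varphi(t_0,x_0))$: $E_0\le0$ if $x_0\in\mathcal O$ (any $t_0\in[0,T]$); $\min(E_0,D\varphi(t_0,x_0)\cdot\gamma(x_0))\le0$ if $x_0\in\partial\mathcal O$ (any $t_0\in[0,T]$). *)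

From mathcomp Require Import ssreflect ssrfun ssrbool eqtype ssrnat seq fintype bigop.
From Stdlib Require Import Reals.
Set Implicit Arguments. Unset Strict Implicit. Unset Printing Implicit Defensive.
Open Scope R_scope.

Definition Rd (d : nat) := 'I_d -> R.

Definition dot {d : nat} (x y : Rd d) : R := \big[Rplus/0]_(i < d) (x i * y i).
Definition vnorm {d : nat} (x : Rd d) : R := sqrt (dot x x).
Definition vsub {d : nat} (x y : Rd d) : Rd d := fun i => x i - y i.
Definition vscale {d : nat} (c : R) (x : Rd d) : Rd d := fun i => c * x i.

Definition is_open {d : nat} (O : Rd d -> Prop) : Prop :=
  forall x, O x -> exists r, 0 < r /\ forall y, vnorm (vsub y x) < r -> O y.
Definition is_bounded {d : nat} (O : Rd d -> Prop) : Prop :=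
  exists M, forall x, O x -> vnorm x <= M.
Definition closure {d : nat} (O : Rd d -> Prop) (x : Rd d) : Prop :=
  forall r, 0 < r -> exists y, O y /\ vnorm (vsub y x) < r.
Definition boundary {d : nat} (O : Rd d -> Prop) (x : Rd d) : Prop :=
  closure O x /\ ~ O x.

Definition has_grad {d : nat} (f : Rd d -> R) (x : Rd d) (g : Rd d) : Prop :=
  forall eps, 0 < eps -> exists delta, 0 < delta /\
    forall y, vnorm (vsub y x) < delta ->
      Rabs (f y - f x - dot g (vsub y x)) <= eps * vnorm (vsub y x).

Definition Lipschitz_vec {d m : nat} (f : Rd d -> Rd m) : Prop :=
  exists L, 0 <= L /\ forall x y, vnorm (vsub (f x) (f y)) <= L * vnorm (vsub x y).

(** O is a domain of class W^{2,infty} with defining function rho: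
    rho in W^{2,infty}(R^d) (bounded, with bounded Lipschitz gradient Drho),
    O = {rho < 0}, and Drho does not vanish on {rho = 0}. *)
Definition W2inf_defining {d : nat} (O : Rd d -> Prop) (rho : Rd d -> R)
  (Drho : Rd d -> Rd d) : Prop :=
  (exists M, forall x, Rabs (rho x) <= M /\ vnorm (Drho x) <= M) /\
  (forall x, has_grad rho x (Drho x)) /\
  Lipschitz_vec Drho /\
  (forall x, O x <-> rho x < 0) /\
  (forall x, rho x = 0 -> 0 < vnorm (Drho x)).

Definition W2inf_domain {d : nat} (O : Rd d -> Prop) (n : Rd d -> Rd d) : Prop :=
  exists rho Drho, W2inf_defining O rho Drho /\
    forall x, boundary O x -> n x = vscale (/ vnorm (Drho x)) (Drho x).

Definition inQ {d : nat} (T : R) (O : Rd d -> Prop) (t : R) (x : Rd d) : Prop :=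
  0 <= t <= T /\ closure O x.

Definition near {d : nat} (r t0 : R) (x0 : Rd d) (t : R) (x : Rd d) : Prop :=
  Rabs (t - t0) < r /\ vnorm (vsub x x0) < r.

Definition cont_on {d : nat} (T : R) (O : Rd d -> Prop) (f : R -> Rd d -> R) : Prop :=
  forall t0 x0, inQ T O t0 x0 -> forall eps, 0 < eps -> exists r, 0 < r /\
    forall t x, inQ T O t x -> near r t0 x0 t x -> Rabs (f t x - f t0 x0) < eps.

Definition usc_on {d : nat} (T : R) (O : Rd d -> Prop) (f : R -> Rd d -> R) : Prop :=
  forall t0 x0, inQ T O t0 x0 -> forall eps, 0 < eps -> exists r, 0 < r /\
    forall t x, inQ T O t x -> near r t0 x0 t x -> f t x < f t0 x0 + eps.

Definition bounded_on {d : nat} (T : R) (O : Rd d -> Prop) (f : R -> Rd d -> R) : Prop :=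
  exists M, forall t x, inQ T O t x -> Rabs (f t x) <= M.

Definition Lip_x_on {d k : nat} (T : R) (O : Rd d -> Prop) (f : R -> Rd d -> Rd k) : Prop :=
  exists L, 0 <= L /\ forall t x y, inQ T O t x -> inQ T O t y ->
    vnorm (vsub (f t x) (f t y)) <= L * vnorm (vsub x y).

Definition vcont_on {d k : nat} (T : R) (O : Rd d -> Prop) (f : R -> Rd d -> Rd k) : Prop :=
  forall i, cont_on T O (fun t x => f t x i).

(** C^1 test functions: phi is C^1 on R x R^d, with time derivative phit and
    spatial gradient Dphi (jointly Fréchet differentiable, continuous derivatives);
    only its restriction to [0,T] x closure(O) matters. *)
Definition C1 {d : nat} (phi : R -> Rd d -> R) (phit : R -> Rd d -> R)
  (Dphi : R -> Rd d -> Rd d) : Prop :=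
  (forall t0 x0 eps, 0 < eps -> exists delta, 0 < delta /\
     forall t x, near delta t0 x0 t x ->
       Rabs (phi t x - phi t0 x0 - phit t0 x0 * (t - t0) - dot (Dphi t0 x0) (vsub x x0))
         <= eps * (Rabs (t - t0) + vnorm (vsub x x0))) /\
  (forall t0 x0 eps, 0 < eps -> exists delta, 0 < delta /\
     forall t x, near delta t0 x0 t x ->
       Rabs (phit t x - phit t0 x0) < eps /\ vnorm (vsub (Dphi t x) (Dphi t0 x0)) < eps).

Definition loc_max {d : nat} (T : R) (O : Rd d -> Prop) (f : R -> Rd d -> R)
  (t0 : R) (x0 : Rd d) : Prop :=
  inQ T O t0 x0 /\ exists r, 0 < r /\
    forall t x, inQ T O t x -> near r t0 x0 t x -> f t x <= f t0 x0.

(** sigma(t,x) is a d x m matrix; (sigma^T p)_j = sum_i sigma_ij p_i. *)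
Definition trmul {d m : nat} (s : 'I_d -> 'I_m -> R) (p : Rd d) : Rd m :=
  fun j => \big[Rplus/0]_(i < d) (s i j * p i).

Definition Ham {d m : nat} (b : R -> Rd d -> Rd d) (sigma : R -> Rd d -> 'I_d -> 'I_m -> R)
  (t : R) (x : Rd d) (p : Rd d) : R :=
  / 2 * (vnorm (trmul (sigma t x) p)) ^ 2 - dot (b t x) p.

Definition Eop {d m : nat} (b : R -> Rd d -> Rd d) (sigma : R -> Rd d -> 'I_d -> 'I_m -> R)
  (psi : R -> Rd d -> R) (t : R) (x : Rd d) (r q : R) (p : Rd d) : R :=
  Rmin (- q + Ham b sigma t x p) (r - psi t x).

Definition VI_min_subsolution {d m : nat} (T : R) (O : Rd d -> Prop) (gamma : Rd d -> Rd d)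
  (b : R -> Rd d -> Rd d) (sigma : R -> Rd d -> 'I_d -> 'I_m -> R)
  (psi : R -> Rd d -> R) (w : R -> Rd d -> R) : Prop :=
  bounded_on T O w /\ usc_on T O w /\
  forall phi phit Dphi, C1 phi phit Dphi ->
  forall t0 x0, loc_max T O (fun t x => w t x - phi t x) t0 x0 ->
    let E0 := Eop b sigma psi t0 x0 (w t0 x0) (phit t0 x0) (Dphi t0 x0) in
    (O x0 -> E0 <= 0) /\
    (boundary O x0 -> Rmin E0 (dot (Dphi t0 x0) (gamma x0)) <= 0).

(* Suppose u(T,x0) > psi(T,x0) for some x0 in the closure of O, and let rho be a
   defining function of O.  Maximise u - phi over [0,T] x cl(O), where
     phi(t,x) = A |x - x0|^2 + lam e sin(rho(x)/e) + K (T - t).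
   With A large and lam e small the maximum point (t1,x1) is close to (T,x0), so
   u > psi there by continuity of psi, and with K large -phi_t + H(t1,x1,Dphi) > 0:
   both terms of E are positive.  If x1 is on the boundary then rho(x1) = 0, so
   Dphi = 2A(x1 - x0) + lam Drho(x1); as gamma . n >= c0 and Drho stays away from 0
   near x0, its derivative along gamma is positive once lam is large.  Either way
   the subsolution inequality fails at (t1,x1).  The term e sin(rho/e) has the
   gradient of rho where rho = 0 but is bounded by e, so unlike lam rho it cannot
   pull the maximum away from (T,x0). *)

From Pilot Require Import Defs.
From HB Require Import structures.
From mathcomp Require Import ssreflect ssrfun ssrbool eqtype ssrnat seq fintype bigop.
From Stdlib Require Import Reals Lra Rtopology ClassicalEpsilon Classical.
Open Scope R_scope.
Set Implicit Arguments. Unset Strict Implicit.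

HB.instance Definition _ := Monoid.isComLaw.Build R 0 Rplus
  (fun a b c => esym (Rplus_assoc a b c)) Rplus_comm Rplus_0_l.

Section Vectors.
Variable d : nat.
Implicit Types (x y z : Rd d) (F G : 'I_d -> R).

Lemma sumR_le F G : (forall i, F i <= G i) ->
  \big[Rplus/0]_(i < d) F i <= \big[Rplus/0]_(i < d) G i.
Proof.
by move=> FG; apply: (big_ind2 (fun a b => a <= b)) => [|? ? ? ? ? ?|i _]; [lra|lra|apply: FG].
Qed.

Lemma sumR_const c : \big[Rplus/0]_(i < d) c = INR d * c.
Proof.
rewrite big_const_ord; elim: d => [|k IH] /=; first lra.
by rewrite IH; case: k {IH} => [|k] /=; lra.
Qed.

Lemma sumR_scale a F :
  \big[Rplus/0]_(i < d) (a * F i) = a * \big[Rplus/0]_(i < d) F i.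
Proof. by apply: (big_ind2 (fun u v => u = a * v)) => [|? ? ? ? -> ->|//]; ring. Qed.

Lemma dotC x y : dot x y = dot y x.
Proof. by apply: eq_bigr => i _; rewrite Rmult_comm. Qed.

Lemma dot_linear a c x y z :
  dot (fun i => a * x i + c * y i) z = a * dot x z + c * dot y z.
Proof.
rewrite /dot -!sumR_scale -big_split; apply: eq_bigr => i _ /=; ring.
Qed.

Lemma dot_scale_l c x y : dot (fun i => c * x i) y = c * dot x y.
Proof. rewrite /dot -sumR_scale; apply: eq_bigr => i _; ring. Qed.

Lemma dot_scale_r c x y : dot x (vscale c y) = c * dot x y.
Proof. rewrite /dot -sumR_scale; apply: eq_bigr => i _; rewrite /vscale; ring. Qed.

Lemma dot_self_ge0 x : 0 <= dot x x.
Proof.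
by apply: (big_ind (fun a => 0 <= a)) => [|? ? ? ?|i _]; [lra|lra|nra].
Qed.

Lemma vnorm_ge0 x : 0 <= vnorm x.
Proof. exact: sqrt_pos. Qed.

Lemma vnorm_sqr x : vnorm x * vnorm x = dot x x.
Proof. by rewrite sqrt_sqrt //; apply: dot_self_ge0. Qed.

Lemma coord_le_vnorm x i : Rabs (x i) <= vnorm x.
Proof.
rewrite -sqrt_Rsqr_abs; apply: sqrt_le_1_alt; rewrite /dot (bigD1 i) //= /Rsqr.
rewrite -{1}[x i * x i]Rplus_0_r; apply: Rplus_le_compat_l.
by apply: (big_ind (fun a => 0 <= a)) => [|? ? ? ?|j _]; [lra|lra|nra].
Qed.

Lemma coord_sub_le_vnorm x y i : Rabs (x i - y i) <= vnorm (vsub x y).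
Proof. exact: (coord_le_vnorm (vsub x y) i). Qed.

Lemma vnorm_le_coord x c : 0 <= c -> (forall i, Rabs (x i) <= c) ->
  vnorm x <= sqrt (INR d) * c.
Proof.
move=> c_ge0 xc; rewrite -(sqrt_square c) // -sqrt_mult; [|exact: pos_INR|nra].
apply: sqrt_le_1_alt; rewrite /dot -sumR_const; apply: sumR_le => i.
have := xc i; have := Rabs_pos (x i); rewrite -[x i * x i]/(Rsqr (x i)) Rsqr_abs /Rsqr.
nra.
Qed.

Lemma vnorm_lt_coord x e : 0 < e -> (forall i, Rabs (x i) < e) ->
  vnorm x < (sqrt (INR d) + 1) * e.
Proof.
move=> e_gt0 xe; have := vnorm_le_coord (Rlt_le _ _ e_gt0) (fun i => Rlt_le _ _ (xe i)).
lra.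
Qed.

Lemma vnorm_sub_triang_coarse x y z :
  vnorm (vsub x z) <= sqrt (INR d) * (vnorm (vsub x y) + vnorm (vsub y z)).
Proof.
apply: vnorm_le_coord => [|i].
  by have := vnorm_ge0 (vsub x y); have := vnorm_ge0 (vsub y z); lra.
have := coord_sub_le_vnorm x y i; have := coord_sub_le_vnorm y z i.
by rewrite /vsub; split_Rabs; lra.
Qed.

Lemma Rabs_dot_le_coord x y a c : (forall i, Rabs (x i) <= a) -> (forall i, Rabs (y i) <= c) ->
  Rabs (dot x y) <= INR d * (a * c).
Proof.
move=> xa yc; rewrite -sumR_const.
apply: Rle_trans (_ : _ <= \big[Rplus/0]_(i < d) Rabs (x i * y i)) _.
  apply: (big_ind2 (fun u v => Rabs u <= v)) => [|u1 u2 v1 v2 h1 h2|i _].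
  - by rewrite Rabs_R0; lra.
  - by apply: Rle_trans (Rabs_triang _ _) _; lra.
  - lra.
apply: sumR_le => i; rewrite Rabs_mult.
by apply: Rmult_le_compat; try apply: Rabs_pos.
Qed.

Lemma Rabs_dot_le x y : Rabs (dot x y) <= INR d * (vnorm x * vnorm y).
Proof. by apply: Rabs_dot_le_coord => i; apply: coord_le_vnorm. Qed.

End Vectors.

Lemma mul_div_succ_le a e : 0 <= a -> 0 <= e -> a * (e / (a + 1)) <= e.
Proof.
move=> a_ge0 e_ge0; have -> : a * (e / (a + 1)) = e - e / (a + 1) by field; lra.
suff : 0 <= e / (a + 1) by lra.
by apply: Rmult_le_pos => //; apply: Rlt_le; apply: Rinv_0_lt_compat; lra.
Qed.

Lemma mul_div_succ_lt a e : 0 <= a -> 0 < e -> a * (e / (a + 1)) < e.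
Proof.
move=> a_ge0 e_gt0; have -> : a * (e / (a + 1)) = e - e / (a + 1) by field; lra.
suff : 0 < e / (a + 1) by lra.
by apply: Rdiv_lt_0_compat; lra.
Qed.

Lemma derivable_pt_lim_remainder g a l : derivable_pt_lim g a l ->
  forall eps, 0 < eps -> exists del, 0 < del /\
    forall h, Rabs h < del -> Rabs (g (a + h) - g a - l * h) <= eps * Rabs h.
Proof.
move=> dg eps eps_gt0; have [del dP] := dg eps eps_gt0.
exists del; split => [|h hdel]; first exact: cond_pos.
have [->|h_neq0] := Req_dec h 0.
  by rewrite Rplus_0_r Rabs_R0 !Rmult_0_r Rminus_diag Rminus_0_r Rabs_R0; lra.
have h_gt0 : 0 < Rabs h by apply: Rabs_pos_lt.
have := dP h h_neq0 hdel.
have -> : (g (a + h) - g a) / h - l = (g (a + h) - g a - l * h) / h by field.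
rewrite /Rdiv Rabs_mult Rabs_inv => q_lt.
have := Rmult_lt_compat_r _ _ _ h_gt0 q_lt.
by rewrite /Rdiv Rmult_assoc Rinv_l; lra.
Qed.

Section Continuity.
Variable d : nat.
Implicit Types (x y : Rd d) (f g : Rd d -> R).

Definition cont_at f x := forall eps, 0 < eps -> exists del, 0 < del /\
  forall y, vnorm (vsub y x) < del -> Rabs (f y - f x) < eps.

Lemma cont_at_coord x i : cont_at (fun y => y i) x.
Proof.
move=> eps eps_gt0; exists eps; split => // y yx.
exact: Rle_lt_trans (coord_sub_le_vnorm y x i) yx.
Qed.

Lemma cont_at_const c x : cont_at (fun _ => c) x.
Proof.
move=> eps eps_gt0; exists 1; split => [|y _]; first lra.
by rewrite Rminus_diag Rabs_R0.
Qed.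

Lemma cont_at_add f g x : cont_at f x -> cont_at g x -> cont_at (fun y => f y + g y) x.
Proof.
move=> cf cg eps eps_gt0.
have [df [df_gt0 fP]] := cf (eps / 2) ltac:(lra).
have [dg [dg_gt0 gP]] := cg (eps / 2) ltac:(lra).
exists (Rmin df dg); split => [|y yx]; first exact: Rmin_glb_lt.
have := fP y (Rlt_le_trans _ _ _ yx (Rmin_l _ _)).
have := gP y (Rlt_le_trans _ _ _ yx (Rmin_r _ _)).
by split_Rabs; lra.
Qed.

Lemma cont_at_mul f g x : cont_at f x -> cont_at g x -> cont_at (fun y => f y * g y) x.
Proof.
move=> cf cg eps eps_gt0.
set a := Rabs (f x) + 1; set c := Rabs (g x).
have a_gt0 : 0 < a by rewrite /a; have := Rabs_pos (f x); lra.
have c_ge0 : 0 <= c := Rabs_pos _.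
have [df [df_gt0 fP]] := cf (Rmin 1 (eps / 2 / (c + 1))) ltac:(apply: Rmin_glb_lt;
  [lra | apply: Rdiv_lt_0_compat; lra]).
have [dg [dg_gt0 gP]] := cg (eps / 2 / a) ltac:(apply: Rdiv_lt_0_compat; lra).
exists (Rmin df dg); split => [|y yx]; first exact: Rmin_glb_lt.
have fy := fP y (Rlt_le_trans _ _ _ yx (Rmin_l _ _)).
have gy := gP y (Rlt_le_trans _ _ _ yx (Rmin_r _ _)).
have fy1 := Rlt_le_trans _ _ _ fy (Rmin_l _ _).
have fy2 := Rlt_le_trans _ _ _ fy (Rmin_r _ _).
have -> : f y * g y - f x * g x = f y * (g y - g x) + g x * (f y - f x) by ring.
apply: Rle_lt_trans (Rabs_triang _ _) _; rewrite !Rabs_mult -/c.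
have fy_le : Rabs (f y) <= a by rewrite /a; move: fy1; split_Rabs; lra.
have t1 : Rabs (f y) * Rabs (g y - g x) < eps / 2.
  have -> : eps / 2 = a * (eps / 2 / a) by field; lra.
  apply: Rle_lt_trans (_ : _ <= a * Rabs (g y - g x)) _.
    by apply: Rmult_le_compat_r => //; apply: Rabs_pos.
  by apply: Rmult_lt_compat_l.
have t2 : c * Rabs (f y - f x) < eps / 2.
  apply: Rle_lt_trans (mul_div_succ_lt c_ge0 (_ : 0 < eps / 2)); last lra.
  by apply: Rmult_le_compat_l => //; apply: Rlt_le.
lra.
Qed.

Lemma cont_at_comp (g : R -> R) f x :
  continuity_pt g (f x) -> cont_at f x -> cont_at (fun y => g (f y)) x.
Proof.
move=> cg cf eps eps_gt0.
have [a [a_gt0 gP]] := cg eps eps_gt0.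
have [del [del_gt0 fP]] := cf a a_gt0.
exists del; split => // y yx.
have [->|neq] := Req_dec (f y) (f x); first by rewrite Rminus_diag Rabs_R0.
exact: gP (f y) (conj (conj I (not_eq_sym neq)) (fP y yx)).
Qed.

Lemma Lipschitz_vec_cont_coord m (F : Rd d -> Rd m) x i :
  Lipschitz_vec F -> cont_at (fun y => F y i) x.
Proof.
move=> [L [L_ge0 FL]] eps eps_gt0.
exists (eps / (L + 1)); split => [|y yx]; first by apply: Rdiv_lt_0_compat; lra.
apply: Rle_lt_trans (coord_sub_le_vnorm _ _ i) _.
apply: Rle_lt_trans (FL y x) _; apply: Rle_lt_trans (mul_div_succ_lt L_ge0 eps_gt0).
by apply: Rmult_le_compat_l => //; apply: Rlt_le.
Qed.

Lemma has_grad_loc_lip f x Df : has_grad f x Df -> exists C del, 0 <= C /\ 0 < del /\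
  forall y, vnorm (vsub y x) < del -> Rabs (f y - f x) <= C * vnorm (vsub y x).
Proof.
move=> fD; have [del [del_gt0 fP]] := fD 1 Rlt_0_1.
exists (INR d * vnorm Df + 1), del; split.
  by have := pos_INR d; have := vnorm_ge0 Df; nra.
split=> // y yx; have := fP y yx; have := Rabs_dot_le Df (vsub y x).
rewrite -Rmult_assoc; have := vnorm_ge0 (vsub y x); split_Rabs; nra.
Qed.

Lemma has_grad_cont f x Df : has_grad f x Df -> cont_at f x.
Proof.
move=> /has_grad_loc_lip [C [del [C_ge0 [del_gt0 fP]]]] eps eps_gt0.
exists (Rmin del (eps / (C + 1))); split => [|y yx].
  by apply: Rmin_glb_lt => //; apply: Rdiv_lt_0_compat; lra.
apply: Rle_lt_trans (fP y (Rlt_le_trans _ _ _ yx (Rmin_l _ _))) _.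
apply: Rle_lt_trans (mul_div_succ_lt C_ge0 eps_gt0).
by apply: Rmult_le_compat_l => //; apply: Rlt_le; apply: Rlt_le_trans yx (Rmin_r _ _).
Qed.

End Continuity.

Lemma common_radius (J : finType) (P : J -> R -> Prop) :
  (forall j r r', 0 < r' <= r -> P j r -> P j r') ->
  (forall j, exists r, 0 < r /\ P j r) -> exists r, 0 < r /\ forall j, P j r.
Proof.
move=> P_down P_ex.
suff [r [r_gt0 rP]] : exists r, 0 < r /\ forall j, j \in enum J -> P j r.
  by exists r; split => // j; apply: rP; rewrite mem_enum.
elim: (enum J) => [|j s [r [r_gt0 rP]]]; first by exists 1; split => //; lra.
have [rj [rj_gt0 rjP]] := P_ex j.
have rr_gt0 := Rmin_glb_lt _ _ _ r_gt0 rj_gt0.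
exists (Rmin r rj); split => // k; rewrite in_cons => /orP [/eqP ->|ks].
  by apply: P_down rjP; split => //; apply: Rmin_r.
by apply: P_down (rP k ks); split => //; apply: Rmin_l.
Qed.

Lemma vcont_of_coords d m (F : Rd d -> Rd m) x : (forall i, cont_at (fun y => F y i) x) ->
  forall eps, 0 < eps -> exists del, 0 < del /\
    forall y, vnorm (vsub y x) < del -> vnorm (vsub (F y) (F x)) < eps.
Proof.
move=> cF eps eps_gt0; set s := sqrt (INR m).
have s_ge0 : 0 <= s := sqrt_pos _.
have e_gt0 : 0 < eps / (s + 1) by apply: Rdiv_lt_0_compat; lra.
pose P i r := forall y, vnorm (vsub y x) < r -> Rabs (F y i - F x i) < eps / (s + 1).
have [del [del_gt0 delP]] : exists del, 0 < del /\ forall i, P i del.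
  apply: common_radius => [i r r' [_ le_r'r] rP y yx|i]; last exact: cF.
  exact: rP y (Rlt_le_trans _ _ _ yx le_r'r).
exists del; split => // y yx.
have -> : eps = (s + 1) * (eps / (s + 1)) by field; lra.
exact: vnorm_lt_coord e_gt0 (fun i => delP i y yx).
Qed.

Section Gradients.
Variable d : nat.
Implicit Types (x y : Rd d) (f g : Rd d -> R).

Definition sqdist (x0 x : Rd d) := dot (vsub x x0) (vsub x x0).

Lemma sqdist_expand (x0 x y : Rd d) :
  sqdist x0 y - sqdist x0 x - dot (fun i => 2 * (x i - x0 i)) (vsub y x) = sqdist x y.
Proof.
rewrite /sqdist /dot.
have sumB F G : \big[Rplus/0]_(i < d) F i - \big[Rplus/0]_(i < d) G i
    = \big[Rplus/0]_(i < d) (F i - G i).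
  by apply: (big_rec3 (fun a b c => a - b = c)) => [|i a b c _ <-]; ring.
rewrite !sumB; apply: eq_bigr => i _ /=; rewrite /vsub; ring.
Qed.

Lemma sqdist_diag (x : Rd d) : sqdist x x = 0.
Proof. by rewrite /sqdist /dot big1 // => i _; rewrite /vsub; ring. Qed.

Lemma has_grad_sqdist (x0 x : Rd d) : has_grad (sqdist x0) x (fun i => 2 * (x i - x0 i)).
Proof.
move=> eps eps_gt0; exists eps; split => // y yx.
rewrite sqdist_expand /sqdist -vnorm_sqr Rabs_right; last by apply: Rle_ge; nra.
by apply: Rmult_le_compat_r; [apply: vnorm_ge0 | apply: Rlt_le].
Qed.

Lemma has_grad_lincomb a c f g x Df Dg : has_grad f x Df -> has_grad g x Dg ->
  has_grad (fun y => a * f y + c * g y) x (fun i => a * Df i + c * Dg i).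
Proof.
move=> fD gD eps eps_gt0.
have [e1_gt0 e2_gt0] : 0 < eps / 2 / (Rabs a + 1) /\ 0 < eps / 2 / (Rabs c + 1).
  by split; apply: Rdiv_lt_0_compat; have := Rabs_pos a; have := Rabs_pos c; lra.
have [df [df_gt0 fP]] := fD _ e1_gt0; have [dg [dg_gt0 gP]] := gD _ e2_gt0.
exists (Rmin df dg); split => [|y yx]; first exact: Rmin_glb_lt.
have fy := fP y (Rlt_le_trans _ _ _ yx (Rmin_l _ _)).
have gy := gP y (Rlt_le_trans _ _ _ yx (Rmin_r _ _)).
rewrite dot_linear.
set v := vnorm (vsub y x) in fy gy *; have v_ge0 : 0 <= v := vnorm_ge0 _.
have bound k e r : 0 < e -> Rabs r <= e / 2 / (Rabs k + 1) * v -> Rabs (k * r) <= e / 2 * v.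
  move=> e_gt0 rk; rewrite Rabs_mult.
  apply: Rle_trans (_ : _ <= Rabs k * (e / 2 / (Rabs k + 1)) * v) _.
    by rewrite Rmult_assoc; apply: Rmult_le_compat_l => //; apply: Rabs_pos.
  apply: Rmult_le_compat_r => //; apply: mul_div_succ_le; [apply: Rabs_pos | lra].
have := bound a eps _ eps_gt0 fy; have := bound c eps _ eps_gt0 gy.
have -> : a * f y + c * g y - (a * f x + c * g x) - (a * dot Df (vsub y x) + c * dot Dg (vsub y x))
  = a * (f y - f x - dot Df (vsub y x)) + c * (g y - g x - dot Dg (vsub y x)) by ring.
by move=> h1 h2; apply: Rle_trans (Rabs_triang _ _) _; lra.
Qed.

Lemma has_grad_comp (h : R -> R) l f x Df :
  derivable_pt_lim h (f x) l -> has_grad f x Df ->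
  has_grad (fun y => h (f y)) x (fun i => l * Df i).
Proof.
move=> hl fD eps eps_gt0.
have [C [del1 [C_ge0 [del1_gt0 fC]]]] := has_grad_loc_lip fD.
have l_ge0 := Rabs_pos l.
have [del2 [del2_gt0 hP]] := derivable_pt_lim_remainder hl
  (Rdiv_lt_0_compat (eps / 2) (C + 1) ltac:(lra) ltac:(lra)).
have [del3 [del3_gt0 fP]] := fD (eps / 2 / (Rabs l + 1)) ltac:(apply: Rdiv_lt_0_compat; lra).
have del_gt0 : 0 < Rmin (Rmin del1 del3) (del2 / (C + 1)).
  by repeat apply: Rmin_glb_lt => //; apply: Rdiv_lt_0_compat; lra.
exists (Rmin (Rmin del1 del3) (del2 / (C + 1))); split => // y yx.
have yx1 := Rlt_le_trans _ _ _ yx (Rle_trans _ _ _ (Rmin_l _ _) (Rmin_l _ _)).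
have yx3 := Rlt_le_trans _ _ _ yx (Rle_trans _ _ _ (Rmin_l _ _) (Rmin_r _ _)).
have yx2 := Rlt_le_trans _ _ _ yx (Rmin_r _ _).
set v := vnorm (vsub y x) in yx yx1 yx2 yx3 *; have v_ge0 : 0 <= v := vnorm_ge0 _.
set k := f y - f x; have k_le : Rabs k <= C * v := fC y yx1.
have k_lt : Rabs k < del2.
  apply: Rle_lt_trans k_le _; apply: Rle_lt_trans (_ : C * v <= C * (del2 / (C + 1))) _.
    by apply: Rmult_le_compat_l => //; apply: Rlt_le.
  exact: mul_div_succ_lt.
have t1 := hP k k_lt; rewrite /k Rplus_minus -/k in t1.
have t2 : Rabs (l * (k - dot Df (vsub y x))) <= eps / 2 * v.
  rewrite Rabs_mult; apply: Rle_trans (_ : _ <= Rabs l * (eps / 2 / (Rabs l + 1)) * v) _.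
    by rewrite Rmult_assoc; apply: Rmult_le_compat_l => //; apply: fP.
  by apply: Rmult_le_compat_r => //; apply: mul_div_succ_le; lra.
have t3 : eps / 2 / (C + 1) * Rabs k <= eps / 2 * v.
  apply: Rle_trans (_ : _ <= C * (eps / 2 / (C + 1)) * v) _.
    rewrite (Rmult_comm C) Rmult_assoc; apply: Rmult_le_compat_l => //.
    by apply: Rlt_le; apply: Rdiv_lt_0_compat; lra.
  by apply: Rmult_le_compat_r => //; apply: mul_div_succ_le; lra.
rewrite dot_scale_l.
have -> : h (f y) - h (f x) - l * dot Df (vsub y x)
  = (h (f y) - h (f x) - l * k) + l * (k - dot Df (vsub y x)) by rewrite /k; ring.
by apply: Rle_trans (Rabs_triang _ _) _; lra.
Qed.

End Gradients.

Lemma C1_cont d (phi phit : R -> Rd d -> R) (Dphi : R -> Rd d -> Rd d) :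
  Defs.C1 phi phit Dphi -> forall t0 x0 eps, 0 < eps -> exists r, 0 < r /\
    forall t x, near r t0 x0 t x -> Rabs (phi t x - phi t0 x0) < eps.
Proof.
move=> [phiD _] t0 x0 eps eps_gt0.
have [del [del_gt0 dP]] := phiD t0 x0 1 Rlt_0_1.
set p := Rabs (phit t0 x0); set q := INR d * vnorm (Dphi t0 x0).
have p_ge0 : 0 <= p := Rabs_pos _.
have q_ge0 : 0 <= q by apply: Rmult_le_pos; [apply: pos_INR | apply: vnorm_ge0].
have e_gt0 : 0 < eps / (2 * (p + q + 1)) by apply: Rdiv_lt_0_compat; lra.
exists (Rmin del (eps / (2 * (p + q + 1)))); split => [|t x [tt xx]].
  exact: Rmin_glb_lt.
have [tt1 tt2] := (Rlt_le_trans _ _ _ tt (Rmin_l _ _), Rlt_le_trans _ _ _ tt (Rmin_r _ _)).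
have [xx1 xx2] := (Rlt_le_trans _ _ _ xx (Rmin_l _ _), Rlt_le_trans _ _ _ xx (Rmin_r _ _)).
have rem := dP t x (conj tt1 xx1).
have lin := Rabs_dot_le (Dphi t0 x0) (vsub x x0).
have tlin := Rabs_mult (phit t0 x0) (t - t0).
rewrite Rmult_1_l -Rmult_assoc -/q in rem lin; rewrite -/p in tlin.
set a := Rabs (t - t0) in tt1 tt2 rem tlin *; set v := vnorm (vsub x x0) in xx1 xx2 rem lin *.
have [a_ge0 v_ge0] : 0 <= a /\ 0 <= v by split; [apply: Rabs_pos | apply: vnorm_ge0].
have le_C : Rabs (phi t x - phi t0 x0) <= (p + q + 1) * (a + v).
  have : p * a <= p * (a + v) by apply: Rmult_le_compat_l; lra.
  have : q * v <= q * (a + v) by apply: Rmult_le_compat_l; lra.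
  have -> : (p + q + 1) * (a + v) = p * (a + v) + q * (a + v) + (a + v) by ring.
  by move: rem lin tlin; split_Rabs; lra.
apply: Rle_lt_trans le_C _.
have -> : eps = (p + q + 1) * (2 * (eps / (2 * (p + q + 1)))) by field; lra.
by apply: Rmult_lt_compat_l; lra.
Qed.

Lemma C1_space_time d (f : Rd d -> R) (Df : Rd d -> Rd d) K T :
  (forall x, has_grad f x (Df x)) -> (forall x i, cont_at (fun y => Df y i) x) ->
  Defs.C1 (fun t x => f x + K * (T - t)) (fun _ _ => - K) (fun _ x => Df x).
Proof.
move=> fD cD; split => t0 x0 eps eps_gt0.
  have [del [del_gt0 fP]] := fD x0 eps eps_gt0.
  exists del; split => // t x [_ xx].
  have -> : f x + K * (T - t) - (f x0 + K * (T - t0)) - - K * (t - t0)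
    - dot (Df x0) (vsub x x0) = f x - f x0 - dot (Df x0) (vsub x x0) by ring.
  apply: Rle_trans (fP x xx) _; apply: Rmult_le_compat_l; first lra.
  by have := Rabs_pos (t - t0); lra.
have [del [del_gt0 DP]] := vcont_of_coords (cD x0) eps_gt0.
exists del; split => // t x [_ xx]; split; last exact: DP.
by rewrite Rminus_diag Rabs_R0.
Qed.

Lemma incr_ge_id (phi : nat -> nat) :
  (forall k, (phi k < phi k.+1)%nat) -> forall k, (k <= phi k)%nat.
Proof. by move=> phi_incr; elim=> [|k IH] //; apply: leq_ltn_trans IH (phi_incr k). Qed.

Lemma bounded_cv_subseq (a : nat -> R) M : (forall k, Rabs (a k) <= M) ->
  exists phi, (forall k, (phi k < phi k.+1)%nat) /\ exists l, forall eps, 0 < eps ->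
    exists N, forall k, (N <= k)%nat -> Rabs (a (phi k) - l) < eps.
Proof.
move=> aM.
have [l la] : exists l, ValAdh a l.
  apply: (Bolzano_Weierstrass a (fun c => -M <= c <= M)); first exact: compact_P3.
  by move=> k; have := aM k; split_Rabs; lra.
have near_l n N : exists k, (N <= k)%nat /\ Rabs (a k - l) < / (INR n + 1).
  have r_gt0 : 0 < / (INR n + 1) by apply: Rinv_0_lt_compat; have := pos_INR n; lra.
  have [k [/leP Nk ak]] := la (disc l (mkposreal _ r_gt0)) N
    (ex_intro _ (mkposreal _ r_gt0) (fun y hy => hy)).
  by exists k.
pose g n N := proj1_sig (constructive_indefinite_description _ (near_l n N)).
have gP n N : (N <= g n N)%nat /\ Rabs (a (g n N) - l) < / (INR n + 1).
  exact: proj2_sig (constructive_indefinite_description _ (near_l n N)).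
pose phi := fix phi k := if k is k'.+1 then g k (phi k').+1 else g 0%nat 0%nat.
exists phi; split => [k|]; first exact: (proj1 (gP k.+1 (phi k).+1)).
exists l => eps eps_gt0; have [N [N_lt N_gt0]] := archimed_cor1 eps eps_gt0.
exists N => k Nk; apply: Rlt_trans (_ : _ < / (INR k + 1)) _.
  by case: k {Nk} => [|k]; [exact: (proj2 (gP 0%nat 0%nat)) | exact: (proj2 (gP k.+1 _))].
apply: Rle_lt_trans N_lt; apply: Rinv_le_contravar; first exact: lt_0_INR.
by have := le_INR _ _ (elimT leP Nk); lra.
Qed.

Lemma finite_cv_subseq (J : finType) (c : J -> nat -> R) M :
  (forall j k, Rabs (c j k) <= M) ->
  exists phi, (forall k, (phi k < phi k.+1)%nat) /\ exists l : J -> R, forall eps, 0 < eps ->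
    exists N, forall k, (N <= k)%nat -> forall j, Rabs (c j (phi k) - l j) < eps.
Proof.
move=> cM.
suff [phi [phi_incr [l lP]]] : exists phi, (forall k, (phi k < phi k.+1)%nat) /\
    exists l : J -> R, forall eps, 0 < eps -> exists N, forall k, (N <= k)%nat ->
      forall j, j \in enum J -> Rabs (c j (phi k) - l j) < eps.
  exists phi; split => //; exists l => eps /lP [N NP].
  by exists N => k Nk j; apply: NP => //; rewrite mem_enum.
elim: (enum J) => [|j s [phi [phi_incr [l lP]]]].
  by exists (fun k => k); split => //; exists (fun _ => 0) => eps _; exists 0%nat.
have [psi [psi_incr [lj ljP]]] := bounded_cv_subseq (fun k => cM j (phi k)).
exists (fun k => phi (psi k)); split.
  by move=> k; apply: (homo_ltn ltn_trans phi_incr); apply: psi_incr.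
exists (fun i => if i == j then lj else l i) => eps eps_gt0.
have [N1 N1P] := lP eps eps_gt0; have [N2 N2P] := ljP eps eps_gt0.
exists (maxn N1 N2) => k; rewrite geq_max => /andP [N1k N2k] i.
rewrite in_cons; case: eqP => [-> _|_ /= i_s]; first exact: N2P.
by apply: N1P => //; apply: leq_trans N1k (incr_ge_id psi_incr k).
Qed.

Section ParabolicDomain.
Variables (d : nat) (T : R) (O : Rd d -> Prop).

Lemma inQ_limit (t : nat -> R) (x : nat -> Rd d) ts xs : (forall k, inQ T O (t k) (x k)) ->
  (forall r, 0 < r -> exists N, forall k, (N <= k)%nat -> near r ts xs (t k) (x k)) ->
  inQ T O ts xs.
Proof.
move=> Qk cv; split; first split.
- apply: Rnot_lt_le => ts_lt; have [N NP] := cv (- ts) ltac:(lra).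
  by have [[[t_ge0 _] _] [tt _]] := (Qk N, NP N (leqnn N)); move: tt; split_Rabs; lra.
- apply: Rnot_lt_le => ts_gt; have [N NP] := cv (ts - T) ltac:(lra).
  by have [[[_ t_le] _] [tt _]] := (Qk N, NP N (leqnn N)); move: tt; split_Rabs; lra.
move=> r r_gt0; set s := sqrt (INR d); have s_ge0 : 0 <= s := sqrt_pos _.
have e_gt0 : 0 < r / (s + 1) / 2 by apply: Rdiv_lt_0_compat; [apply: Rdiv_lt_0_compat|]; lra.
have [N NP] := cv _ e_gt0; have [_ xN] := NP N (leqnn N).
have [y [Oy yx]] := (proj2 (Qk N)) _ e_gt0.
exists y; split => //; apply: Rle_lt_trans (vnorm_sub_triang_coarse y (x N) xs) _.
apply: Rle_lt_trans (mul_div_succ_lt s_ge0 r_gt0).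
by apply: Rmult_le_compat_l => //; lra.
Qed.

Hypothesis O_bounded : is_bounded O.

Lemma closure_coord_bound : exists M, forall x, closure O x -> forall i, Rabs (x i) <= M.
Proof.
have [R0 R0P] := O_bounded; exists (R0 + 1) => x Ox i.
have [y [Oy yx]] := Ox 1 Rlt_0_1.
have := R0P y Oy; have := coord_sub_le_vnorm y x i; have := coord_le_vnorm y i.
by split_Rabs; lra.
Qed.

Lemma inQ_seq_compact (t : nat -> R) (x : nat -> Rd d) : (forall k, inQ T O (t k) (x k)) ->
  exists phi ts xs, (forall k, (phi k < phi k.+1)%nat) /\ inQ T O ts xs /\
    forall r, 0 < r -> exists N, forall k, (N <= k)%nat -> near r ts xs (t (phi k)) (x (phi k)).
Proof.
move=> Qk; have [M MP] := closure_coord_bound.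
pose c (j : option 'I_d) k := if j is Some i then x k i else t k.
have c_bd j k : Rabs (c j k) <= Rabs T + Rabs M.
  have [[t_ge0 t_le] xk] := Qk k; have := Rabs_pos T; have := Rabs_pos M.
  by case: j => [i|] /=; [have := MP _ xk i|]; split_Rabs; lra.
have [phi [phi_incr [l lP]]] := finite_cv_subseq c_bd.
have cv r : 0 < r -> exists N, forall k, (N <= k)%nat ->
    near r (l None) (fun i => l (Some i)) (t (phi k)) (x (phi k)).
  move=> r_gt0; set s := sqrt (INR d); have s_ge0 : 0 <= s := sqrt_pos _.
  have [N NP] := lP (r / (s + 1)) ltac:(apply: Rdiv_lt_0_compat; lra).
  exists N => k Nk; split.
    apply: Rlt_le_trans (NP k Nk None) _.
    have -> : r / (s + 1) = r - s * (r / (s + 1)) by field; lra.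
    suff : 0 <= s * (r / (s + 1)) by lra.
    by apply: Rmult_le_pos => //; apply: Rlt_le; apply: Rdiv_lt_0_compat; lra.
  have -> : r = (s + 1) * (r / (s + 1)) by field; lra.
  by apply: vnorm_lt_coord => [|i]; [apply: Rdiv_lt_0_compat; lra | apply: (NP k Nk (Some i))].
exists phi, (l None), (fun i => l (Some i)); split => //; split => //.
exact: inQ_limit (fun k => Qk (phi k)) cv.
Qed.

Lemma usc_attains_max (f : R -> Rd d -> R) M t0 x0 : inQ T O t0 x0 -> usc_on T O f ->
  (forall t x, inQ T O t x -> f t x <= M) ->
  exists t1 x1, inQ T O t1 x1 /\ forall t x, inQ T O t x -> f t x <= f t1 x1.
Proof.
move=> Q0 fusc fM.
pose E v := exists t x, inQ T O t x /\ v = f t x.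
have [S [S_ub S_lub]] : {S | is_lub E S}.
  apply: completeness; first by exists M => v [t [x [Q ->]]]; apply: fM.
  by exists (f t0 x0), t0, x0.
have approx k : exists p : R * Rd d, inQ T O p.1 p.2 /\ S - / (INR k + 1) < f p.1 p.2.
  have k_gt0 : 0 < / (INR k + 1) by apply: Rinv_0_lt_compat; have := pos_INR k; lra.
  apply: NNPP => none; suff : S <= S - / (INR k + 1) by lra.
  apply: S_lub => v [t [x [Q ->]]]; apply: Rnot_lt_le => lt.
  by apply: none; exists (t, x).
pose p k := proj1_sig (constructive_indefinite_description _ (approx k)).
have pP k : inQ T O (p k).1 (p k).2 /\ S - / (INR k + 1) < f (p k).1 (p k).2.
  exact: proj2_sig (constructive_indefinite_description _ (approx k)).
have [phi [ts [xs [phi_incr [Qs cv]]]]] :=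
  inQ_seq_compact (fun k => proj1 (pP k)).
exists ts, xs; split => // t x Q.
apply: Rle_trans (S_ub _ (ex_intro _ t (ex_intro _ x (conj Q erefl)))) _.
apply: Rle_plus_epsilon => eta eta_gt0.
have [r [r_gt0 rP]] := fusc ts xs Qs (eta / 2) ltac:(lra).
have [N NP] := cv r r_gt0; have [N2 [N2_lt N2_gt0]] := archimed_cor1 (eta / 2) ltac:(lra).
set k := maxn N N2.
have := rP _ _ (proj1 (pP (phi k))) (NP k (leq_maxl _ _)); have := proj2 (pP (phi k)).
suff : / (INR (phi k) + 1) < eta / 2 by lra.
apply: Rle_lt_trans N2_lt; apply: Rinv_le_contravar; first exact: lt_0_INR.
have : (N2 <= phi k)%nat by apply: leq_trans (leq_maxr N N2) (incr_ge_id phi_incr k).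
by move/leP/le_INR; lra.
Qed.

End ParabolicDomain.

Section Geometry.
Variables (d : nat) (O : Rd d -> Prop).

Lemma closure_sublevel f x : cont_at f x -> (forall y, O y -> f y < 0) -> closure O x -> f x <= 0.
Proof.
move=> fc Of Ox; apply: Rnot_lt_le => fx_gt0.
have [del [del_gt0 fP]] := fc _ fx_gt0; have [y [Oy yx]] := Ox _ del_gt0.
by have := fP y yx; have := Of y Oy; split_Rabs; lra.
Qed.

Lemma boundary_zero_level f x : cont_at f x -> (forall y, O y <-> f y < 0) ->
  boundary O x -> f x = 0.
Proof.
move=> fc O_f [x_cl notOx].
have := closure_sublevel fc (fun y Oy => proj1 (O_f y) Oy) x_cl.
by have := Rnot_lt_le _ _ (fun h => notOx (proj2 (O_f x) h)); lra.
Qed.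

Lemma vnorm_lb_near m (F : Rd d -> Rd m) x0 : Lipschitz_vec F -> 0 < vnorm (F x0) ->
  exists r k, 0 < r /\ 0 < k /\ forall x, vnorm (vsub x x0) < r -> k <= vnorm (F x).
Proof.
move=> F_lip F0_gt0.
have [i Fi_gt0] : exists i, 0 < Rabs (F x0 i).
  apply: NNPP => none; suff : vnorm (F x0) <= sqrt (INR m) * 0 by lra.
  apply: vnorm_le_coord => [|i]; first lra.
  by apply: Rnot_lt_le => Fi; apply: none; exists i.
have half_gt0 : 0 < Rabs (F x0 i) / 2 by lra.
have [r [r_gt0 rP]] := Lipschitz_vec_cont_coord x0 i F_lip half_gt0.
exists r, (Rabs (F x0 i) / 2); do 2!split => //.
move=> x xx0; apply: Rle_trans (coord_le_vnorm (F x) i).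
by have := rP x xx0; split_Rabs; lra.
Qed.

Lemma Lipschitz_vec_coord_bound m (F : Rd d -> Rd m) x0 : Lipschitz_vec F ->
  exists G, 0 <= G /\ forall x, vnorm (vsub x x0) < 1 -> forall i, Rabs (F x i) <= G.
Proof.
move=> [L [L_ge0 FL]]; exists (vnorm (F x0) + L); split => [|x xx0 i].
  by have := vnorm_ge0 (F x0); lra.
have := coord_sub_le_vnorm (F x) (F x0) i; have := coord_le_vnorm (F x0) i.
have : L * vnorm (vsub x x0) <= L by have := vnorm_ge0 (vsub x x0); nra.
by have := FL x x0; split_Rabs; lra.
Qed.

Lemma oblique_dot_lb (n gamma D : Rd d -> Rd d) c0 x : boundary O x ->
  n x = vscale (/ vnorm (D x)) (D x) -> c0 <= dot (gamma x) (n x) -> 0 < vnorm (D x) ->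
  c0 * vnorm (D x) <= dot (D x) (gamma x).
Proof.
move=> _ -> + D_gt0; rewrite dot_scale_r dotC => c0_le.
have := Rmult_le_compat_l _ _ _ (Rlt_le _ _ D_gt0) c0_le.
by rewrite -Rmult_assoc Rinv_r; lra.
Qed.

End Geometry.

Lemma oblique_penalty d (O : Rd d -> Prop) rho (Drho n gamma : Rd d -> Rd d) c0 x0 :
  is_open O -> W2inf_defining O rho Drho ->
  (forall x, boundary O x -> n x = vscale (/ vnorm (Drho x)) (Drho x)) ->
  Lipschitz_vec gamma -> 0 < c0 -> (forall x, boundary O x -> c0 <= dot (gamma x) (n x)) ->
  closure O x0 ->
  exists r, 0 < r /\ forall A, 0 <= A -> exists lam, 0 <= lam /\ lam * rho x0 = 0 /\
    forall x, vnorm (vsub x x0) < r -> boundary O x ->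
      0 < dot (fun i => A * (2 * (x i - x0 i)) + lam * Drho x i) (gamma x).
Proof.
move=> O_open [_ [rho_grad [Drho_lip [O_rho Drho_nz]]]] n_def gamma_lip c0_gt0 c0_le x0_cl.
have [O0|notO0] := classic (O x0).
  have [r [r_gt0 rP]] := O_open x0 O0.
  exists r; split => // A _; exists 0; split; [lra | split; first ring].
  by move=> x xx0 [_ notOx]; have := rP x xx0.
have rho0 := boundary_zero_level (has_grad_cont (rho_grad x0)) O_rho (conj x0_cl notO0).
have [r1 [k [r1_gt0 [k_gt0 kP]]]] := vnorm_lb_near Drho_lip (Drho_nz x0 rho0).
have [G [G_ge0 GP]] := Lipschitz_vec_coord_bound x0 gamma_lip.
have ck_gt0 : 0 < c0 * k by nra.
exists (Rmin r1 1); split => [|A A_ge0]; first by apply: Rmin_glb_lt; lra.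
have Q_ge0 : 0 <= A * (INR d * (2 * G)).
  by apply: Rmult_le_pos => //; apply: Rmult_le_pos; [apply: pos_INR | lra].
set lam := (A * (INR d * (2 * G)) + 1) / (c0 * k).
have lam_ge0 : 0 <= lam by apply: Rlt_le; apply: Rdiv_lt_0_compat; lra.
exists lam; split => //; split => [|x xx0 bx]; first by rewrite rho0; ring.
have [xr1 x1] := (Rlt_le_trans _ _ _ xx0 (Rmin_l _ _), Rlt_le_trans _ _ _ xx0 (Rmin_r _ _)).
have Dx_ge := kP x xr1.
have Dg := oblique_dot_lb bx (n_def x bx) (c0_le x bx) (Rlt_le_trans _ _ _ k_gt0 Dx_ge).
have quad : Rabs (dot (fun i => 2 * (x i - x0 i)) (gamma x)) <= INR d * (2 * G).
  apply: Rabs_dot_le_coord => i; last exact: GP.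
  by rewrite Rabs_mult Rabs_right; [have := coord_sub_le_vnorm x x0 i; lra | lra].
rewrite dot_linear.
have lam_eq : lam * (c0 * k) = A * (INR d * (2 * G)) + 1 by rewrite /lam; field; lra.
have : lam * (c0 * k) <= lam * dot (Drho x) (gamma x).
  by apply: Rmult_le_compat_l => //; nra.
have : - (A * (INR d * (2 * G))) <= A * dot (fun i => 2 * (x i - x0 i)) (gamma x).
  by move: quad; split_Rabs; nra.
lra.
Qed.

Lemma Ham_ge_neg_dot d m (b : R -> Rd d -> Rd d) (sigma : R -> Rd d -> 'I_d -> 'I_m -> R) t x p :
  - dot (b t x) p <= Ham b sigma t x p.
Proof.
rewrite /Ham; suff : 0 <= / 2 * vnorm (trmul (sigma t x) p) ^ 2 by lra.
by apply: Rmult_le_pos; [lra | apply: pow2_ge_0].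
Qed.

Lemma usc_on_sub_C1 d T (O : Rd d -> Prop) (u phi phit : R -> Rd d -> R) Dphi :
  usc_on T O u -> Defs.C1 phi phit Dphi -> usc_on T O (fun t x => u t x - phi t x).
Proof.
move=> u_usc phiC1 t0 x0 Q0 eps eps_gt0.
have [r1 [r1_gt0 uP]] := u_usc t0 x0 Q0 (eps / 2) ltac:(lra).
have [r2 [r2_gt0 phiP]] := C1_cont phiC1 (eps := eps / 2) t0 x0 ltac:(lra).
exists (Rmin r1 r2); split => [|t x Q [tt xx]]; first exact: Rmin_glb_lt.
have := uP t x Q (conj (Rlt_le_trans _ _ _ tt (Rmin_l _ _)) (Rlt_le_trans _ _ _ xx (Rmin_l _ _))).
have := phiP t x (conj (Rlt_le_trans _ _ _ tt (Rmin_r _ _)) (Rlt_le_trans _ _ _ xx (Rmin_r _ _))).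
by split_Rabs; lra.
Qed.

Lemma vcont_on_bound_near d k T (O : Rd d -> Prop) (b : R -> Rd d -> Rd k) t0 x0 :
  vcont_on T O b -> inQ T O t0 x0 -> exists r, 0 < r /\
    forall t x, inQ T O t x -> near r t0 x0 t x -> forall i, Rabs (b t x i) <= vnorm (b t0 x0) + 1.
Proof.
move=> b_cont Q0.
pose P i r := forall t x, inQ T O t x -> near r t0 x0 t x -> Rabs (b t x i - b t0 x0 i) < 1.
have [r [r_gt0 rP]] : exists r, 0 < r /\ forall i, P i r.
  apply: common_radius => [i r r' [_ le_r'r] iP t x Q [tt xx]|i].
    by apply: iP => //; split; lra.
  exact: b_cont i t0 x0 Q0 1 Rlt_0_1.
exists r; split => // t x Q txr i.
by have := rP i t x Q txr; have := coord_le_vnorm (b t0 x0) i; split_Rabs; lra.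
Qed.

Definition sin_cap (e s : R) := e * sin (s / e).

Lemma derivable_pt_lim_div_const e s : derivable_pt_lim (fun s => s / e) s (/ e).
Proof.
have := derivable_pt_lim_scal_right id s 1 (/ e) (derivable_pt_lim_id s).
by rewrite Rmult_1_l.
Qed.

Lemma sin_cap_derive e s : e <> 0 -> derivable_pt_lim (sin_cap e) s (cos (s / e)).
Proof.
move=> e_neq0.
have := derivable_pt_lim_comp _ sin s _ _ (derivable_pt_lim_div_const e s)
  (derivable_pt_lim_sin (s / e)).
move=> /(derivable_pt_lim_scal _ e) sin_d.
by have -> : cos (s / e) = e * (cos (s / e) * / e) by field.
Qed.

Lemma cos_div_cont e s : continuity_pt (fun s => cos (s / e)) s.
Proof.
apply: derivable_continuous_pt; exists (- sin (s / e) * / e).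
exact: derivable_pt_lim_comp _ cos s _ _ (derivable_pt_lim_div_const e s)
  (derivable_pt_lim_cos (s / e)).
Qed.

Lemma Rabs_sin_cap_le e s : 0 < e -> Rabs (sin_cap e s) <= e.
Proof.
move=> e_gt0; rewrite /sin_cap Rabs_mult Rabs_right; last lra.
have s_le : Rabs (sin (s / e)) <= 1 by have := SIN_bound (s / e); split_Rabs; lra.
by have := Rmult_le_compat_l e _ _ (Rlt_le _ _ e_gt0) s_le; lra.
Qed.

Section TerminalCondition.
Variables (d m : nat) (T : R) (O : Rd d -> Prop) (gamma : Rd d -> Rd d).
Variables (b : R -> Rd d -> Rd d) (sigma : R -> Rd d -> 'I_d -> 'I_m -> R).
Variables (psi u : R -> Rd d -> R) (rho : Rd d -> R) (Drho : Rd d -> Rd d).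
Hypothesis T_ge0 : 0 <= T.
Hypothesis O_bounded : is_bounded O.
Hypothesis rho_def : W2inf_defining O rho Drho.
Hypothesis psi_cont : cont_on T O psi.
Hypothesis b_cont : vcont_on T O b.
Hypothesis u_sub : VI_min_subsolution T O gamma b sigma psi u.

Let rho_grad : forall x, has_grad rho x (Drho x) := proj1 (proj2 rho_def).
Let Drho_lip : Lipschitz_vec Drho := proj1 (proj2 (proj2 rho_def)).
Let O_rho : forall x, O x <-> rho x < 0 := proj1 (proj2 (proj2 (proj2 rho_def))).

Definition penalty x0 A lam e K t x :=
  A * sqdist x0 x + lam * sin_cap e (rho x) + K * (T - t).

Definition penalty_grad (x0 : Rd d) A lam e (x : Rd d) : Rd d :=
  fun i => A * (2 * (x i - x0 i)) + lam * (cos (rho x / e) * Drho x i).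

Lemma penalty_C1 x0 A lam e K : e <> 0 ->
  Defs.C1 (penalty x0 A lam e K) (fun _ _ => - K) (fun _ => penalty_grad x0 A lam e).
Proof.
move=> e_neq0.
apply: (C1_space_time (f := fun x => A * sqdist x0 x + lam * sin_cap e (rho x))) => [x|x i].
  exact: has_grad_lincomb (has_grad_sqdist x0 x)
    (has_grad_comp (sin_cap_derive _ e_neq0) (rho_grad x)).
apply: cont_at_add; apply: cont_at_mul (cont_at_const _ _) _.
  exact: cont_at_mul (cont_at_const _ _) (cont_at_add (cont_at_coord _ _) (cont_at_const _ _)).
apply: cont_at_mul; last exact: Lipschitz_vec_cont_coord.
exact: (cont_at_comp (g := fun s => cos (s / e))) (cos_div_cont _ _) (has_grad_cont (rho_grad x)).
Qed.

Lemma penalty_lb x0 A lam e K t x : 0 <= A -> 0 <= lam -> 0 < e -> t <= T ->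
  A * sqdist x0 x + K * (T - t) - lam * e <= penalty x0 A lam e K t x.
Proof.
move=> A_ge0 lam_ge0 e_gt0 t_le; rewrite /penalty.
suff : lam * sin_cap e (rho x) >= - (lam * e) by lra.
by move: (Rabs_sin_cap_le (rho x) e_gt0); split_Rabs; nra.
Qed.

Lemma penalty_at_center x0 A lam e K : lam * rho x0 = 0 -> penalty x0 A lam e K T x0 = 0.
Proof.
rewrite /penalty sqdist_diag => /Rmult_integral [->|->]; first ring.
by rewrite /sin_cap /Rdiv Rmult_0_l sin_0; ring.
Qed.

Lemma penalty_grad_coord_le x0 A lam e Mr x i : 0 <= A -> 0 <= lam ->
  vnorm (Drho x) <= Mr -> vnorm (vsub x x0) <= 1 ->
  Rabs (penalty_grad x0 A lam e x i) <= 2 * A + lam * Mr.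
Proof.
move=> A_ge0 lam_ge0 D_le xx0; rewrite /penalty_grad.
apply: Rle_trans (Rabs_triang _ _) _; rewrite !Rabs_mult (Rabs_right A) ?(Rabs_right lam);
  try lra.
have c_le : Rabs (cos (rho x / e)) <= 1 by have := COS_bound (rho x / e); split_Rabs; lra.
have t1 : A * (Rabs 2 * Rabs (x i - x0 i)) <= 2 * A.
  rewrite Rabs_right; last lra.
  by have := coord_sub_le_vnorm x x0 i; have := Rabs_pos (x i - x0 i); nra.
have t2 : lam * (Rabs (cos (rho x / e)) * Rabs (Drho x i)) <= lam * Mr.
  apply: Rmult_le_compat_l => //; rewrite -[Mr]Rmult_1_l.
  apply: Rmult_le_compat => //; try apply: Rabs_pos.
  exact: Rle_trans (coord_le_vnorm _ i) D_le.
lra.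
Qed.

Lemma dot_penalty_grad_zero x0 A lam e x v : rho x = 0 ->
  dot (penalty_grad x0 A lam e x) v = dot (fun i => A * (2 * (x i - x0 i)) + lam * Drho x i) v.
Proof.
move=> rho0; apply: eq_bigr => i _.
by rewrite /penalty_grad rho0 /Rdiv Rmult_0_l cos_0 Rmult_1_l.
Qed.

Lemma penalty_max_exists x0 A lam e K : closure O x0 -> 0 <= A -> 0 <= lam -> 0 < e -> 0 <= K ->
  exists t1 x1, inQ T O t1 x1 /\ forall t x, inQ T O t x ->
    u t x - penalty x0 A lam e K t x <= u t1 x1 - penalty x0 A lam e K t1 x1.
Proof.
move=> x0_cl A_ge0 lam_ge0 e_gt0 K_ge0; have [[Mu uM] [u_usc _]] := u_sub.
have Q0 : inQ T O T x0 by split; [lra|].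
apply: (usc_attains_max (M := Mu + lam * e) O_bounded Q0) => [|t x Q].
  exact: usc_on_sub_C1 u_usc (penalty_C1 x0 A lam K (Rgt_not_eq _ _ e_gt0)).
have [[_ t_le] _] := Q.
have := penalty_lb x0 K x A_ge0 lam_ge0 e_gt0 t_le; have := uM t x Q.
have : 0 <= A * sqdist x0 x by apply: Rmult_le_pos => //; apply: dot_self_ge0.
have : 0 <= K * (T - t) by apply: Rmult_le_pos; lra.
by split_Rabs; lra.
Qed.

Lemma penalty_max_localized x0 A lam e K Mu r t1 x1 :
  0 < r -> 0 <= A -> 0 <= lam -> 0 < e -> 0 <= K -> lam * e <= 1 -> lam * rho x0 = 0 ->
  A * (r * r) = 2 * Mu + 2 -> 2 * Mu + 2 <= K * r ->
  (forall t x, inQ T O t x -> Rabs (u t x) <= Mu) -> inQ T O T x0 -> inQ T O t1 x1 ->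
  u T x0 - penalty x0 A lam e K T x0 <= u t1 x1 - penalty x0 A lam e K t1 x1 ->
  near r T x0 t1 x1 /\ u T x0 - lam * e <= u t1 x1.
Proof.
move=> r_gt0 A_ge0 lam_ge0 e_gt0 K_ge0 lam_e lam_rho A_r K_r uM Q0 Q1.
have [[_ t1_le] _] := Q1.
rewrite penalty_at_center // Rminus_0_r => max1.
have lb := penalty_lb x0 K x1 A_ge0 lam_ge0 e_gt0 t1_le.
have sq_ge0 : 0 <= A * sqdist x0 x1 by apply: Rmult_le_pos => //; apply: dot_self_ge0.
have Kt_ge0 : 0 <= K * (T - t1) by apply: Rmult_le_pos; lra.
have u_osc : u t1 x1 - u T x0 <= 2 * Mu by have := uM _ _ Q0; have := uM _ _ Q1; split_Rabs; lra.
split; last lra.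
split; first rewrite Rabs_left1; try lra.
  apply: Rnot_le_lt => r_le; suff : K * r <= K * (T - t1) by lra.
  by apply: Rmult_le_compat_l; lra.
apply: Rnot_le_lt => r_le; suff : A * (r * r) <= A * sqdist x0 x1 by lra.
by apply: Rmult_le_compat_l => //; rewrite /sqdist -vnorm_sqr; apply: Rmult_le_compat; lra.
Qed.

Lemma Eop_penalty_pos x0 A lam e K Mr t1 x1 Bb :
  0 <= A -> 0 <= lam -> vnorm (Drho x1) <= Mr -> vnorm (vsub x1 x0) <= 1 ->
  (forall i, Rabs (b t1 x1 i) <= Bb) -> INR d * (Bb * (2 * A + lam * Mr)) < K ->
  psi t1 x1 < u t1 x1 -> 0 < Eop b sigma psi t1 x1 (u t1 x1) (- K) (penalty_grad x0 A lam e x1).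
Proof.
move=> A_ge0 lam_ge0 D_le xx0 b_le K_gt psi_lt; rewrite /Eop; apply: Rmin_glb_lt; last lra.
have := Ham_ge_neg_dot b sigma t1 x1 (penalty_grad x0 A lam e x1).
have := Rabs_dot_le_coord b_le (fun i => penalty_grad_coord_le e i A_ge0 lam_ge0 D_le xx0).
by split_Rabs; lra.
Qed.

Lemma penalty_max_absurd x0 A lam e K t1 x1 : e <> 0 -> inQ T O t1 x1 ->
  (forall t x, inQ T O t x ->
    u t x - penalty x0 A lam e K t x <= u t1 x1 - penalty x0 A lam e K t1 x1) ->
  0 < Eop b sigma psi t1 x1 (u t1 x1) (- K) (penalty_grad x0 A lam e x1) ->
  (boundary O x1 -> 0 < dot (fun i => A * (2 * (x1 i - x0 i)) + lam * Drho x1 i) (gamma x1)) ->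
  False.
Proof.
move=> e_neq0 Q1 max1 E_pos oblique; have [_ [_ u_test]] := u_sub.
have loc1 : loc_max T O (fun t x => u t x - penalty x0 A lam e K t x) t1 x1.
  by split => //; exists 1; split => [|t x Q _]; [lra | apply: max1].
have [int bnd] := u_test _ _ _ (penalty_C1 x0 A lam K e_neq0) t1 x1 loc1.
have [Ox1|notOx1] := classic (O x1); first by have := int Ox1; lra.
have bx1 : boundary O x1 := conj (proj2 Q1) notOx1.
have rho1 := boundary_zero_level (has_grad_cont (rho_grad x1)) O_rho bx1.
have := bnd bx1; rewrite dot_penalty_grad_zero //.
by have := Rmin_glb_lt _ _ _ E_pos (oblique bx1); lra.
Qed.

Lemma terminal_neighbourhood x0 r0 del : closure O x0 -> 0 < r0 -> 0 < del ->
  exists r, 0 < r /\ r <= r0 /\ r <= 1 /\ forall t x, inQ T O t x -> near r T x0 t x ->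
    psi t x < psi T x0 + del /\ forall i, Rabs (b t x i) <= vnorm (b T x0) + 1.
Proof.
move=> x0_cl r0_gt0 del_gt0; have Q0 : inQ T O T x0 by split; [lra|].
have [rp [rp_gt0 psiP]] := psi_cont Q0 del_gt0.
have [rb [rb_gt0 bP]] := vcont_on_bound_near b_cont Q0.
exists (Rmin (Rmin rp rb) (Rmin r0 1)).
have r_rp := Rle_trans _ _ _ (Rmin_l (Rmin rp rb) (Rmin r0 1)) (Rmin_l rp rb).
have r_rb := Rle_trans _ _ _ (Rmin_l (Rmin rp rb) (Rmin r0 1)) (Rmin_r rp rb).
split; first by repeat apply: Rmin_glb_lt; lra.
split; first exact: Rle_trans (Rmin_r _ _) (Rmin_l _ _).
split; first exact: Rle_trans (Rmin_r _ _) (Rmin_r _ _).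
move=> t x Q [tt xx]; split; last by apply: bP => //; split; lra.
have := psiP t x Q (conj (Rlt_le_trans _ _ _ tt r_rp) (Rlt_le_trans _ _ _ xx r_rp)).
by split_Rabs; lra.
Qed.

Lemma subsolution_le_obstacle_at_T x0 r0 : closure O x0 -> 0 < r0 ->
  (forall A, 0 <= A -> exists lam, 0 <= lam /\ lam * rho x0 = 0 /\
    forall x, vnorm (vsub x x0) < r0 -> boundary O x ->
      0 < dot (fun i => A * (2 * (x i - x0 i)) + lam * Drho x i) (gamma x)) ->
  u T x0 <= psi T x0.
Proof.
move=> x0_cl r0_gt0 oblique; apply: Rnot_lt_le => viol.
have [[Mu uM] _] := u_sub; have [[Mr MrP] _] := rho_def.
have Q0 : inQ T O T x0 by split; [lra|].
have Mu_ge0 : 0 <= Mu by have := uM _ _ Q0; have := Rabs_pos (u T x0); lra.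
have Mr_ge0 : 0 <= Mr by have := proj2 (MrP x0); have := vnorm_ge0 (Drho x0); lra.
set del := u T x0 - psi T x0.
have [r [r_gt0 [r_r0 [r_le1 near_bd]]]] := terminal_neighbourhood x0_cl r0_gt0
  (Rdiv_lt_0_compat del 3 ltac:(rewrite /del; lra) ltac:(lra)).
set A := (2 * Mu + 2) / (r * r).
have A_ge0 : 0 <= A by apply: Rlt_le; apply: Rdiv_lt_0_compat; nra.
have A_r : A * (r * r) = 2 * Mu + 2 by rewrite /A; field; lra.
have [lam [lam_ge0 [lam_rho lamP]]] := oblique A A_ge0.
set eta := Rmin 1 (del / 3); set e := eta / (lam + 1).
have [eta_le1 eta_le] : eta <= 1 /\ eta <= del / 3 by split; [apply: Rmin_l | apply: Rmin_r].
have eta_gt0 : 0 < eta by apply: Rmin_glb_lt; rewrite /del; lra.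
have e_gt0 : 0 < e by apply: Rdiv_lt_0_compat; lra.
have lam_e : lam * e <= eta := mul_div_succ_le lam_ge0 (Rlt_le _ _ eta_gt0).
set B := INR d * ((vnorm (b T x0) + 1) * (2 * A + lam * Mr)).
have B_ge0 : 0 <= B.
  apply: Rmult_le_pos; [apply: pos_INR | apply: Rmult_le_pos; last nra].
  by have := vnorm_ge0 (b T x0); lra.
set K := (2 * Mu + 2) / r + B + 1.
have K_r : 2 * Mu + 2 <= K * r.
  have -> : K * r = 2 * Mu + 2 + (B + 1) * r by rewrite /K; field; lra.
  by nra.
have K_gt : B < K.
  have : 0 < (2 * Mu + 2) / r by apply: Rdiv_lt_0_compat; lra.
  by rewrite /K; lra.
have K_ge0 : 0 <= K by lra.
have [t1 [x1 [Q1 max1]]] := penalty_max_exists x0_cl A_ge0 lam_ge0 e_gt0 K_ge0.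
have [near1 u1] := penalty_max_localized r_gt0 A_ge0 lam_ge0 e_gt0 K_ge0
  (Rle_trans _ _ _ lam_e eta_le1) lam_rho A_r K_r uM Q0 Q1 (max1 T x0 Q0).
have [psi1 b1] := near_bd t1 x1 Q1 near1.
apply: (penalty_max_absurd (Rgt_not_eq _ _ e_gt0) Q1 max1) => [|bx1].
  apply: (Eop_penalty_pos e A_ge0 lam_ge0 (proj2 (MrP x1))) b1 K_gt _.
    by have := proj2 near1; lra.
  by move: psi1 eta_le; rewrite /del; lra.
exact: lamP x1 (Rlt_le_trans _ _ _ (proj2 near1) r_r0) bx1.
Qed.

End TerminalCondition.

Theorem mainTheorem16 (d m : nat) (T : R) (O : Rd d -> Prop) (n gamma : Rd d -> Rd d)
  (c0 : R) (b : R -> Rd d -> Rd d) (sigma : R -> Rd d -> 'I_d -> 'I_m -> R)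
  (psi u : R -> Rd d -> R) :
  0 < T ->
  is_open O -> is_bounded O -> W2inf_domain O n ->
  Lipschitz_vec gamma -> 0 < c0 ->
  (forall x, boundary O x -> c0 <= dot (gamma x) (n x)) ->
  vcont_on T O b -> Lip_x_on T O b ->
  (forall i j, cont_on T O (fun t x => sigma t x i j)) ->
  (exists L, 0 <= L /\ forall t x y i j, inQ T O t x -> inQ T O t y ->
      Rabs (sigma t x i j - sigma t y i j) <= L * vnorm (vsub x y)) ->
  cont_on T O psi ->
  VI_min_subsolution T O gamma b sigma psi u ->
  forall x, closure O x -> u T x <= psi T x.
Proof.
move=> T_gt0 O_open O_bounded [rho [Drho [rho_def n_def]]] gamma_lip c0_gt0 gamma_n b_cont _ _ _
  psi_cont u_sub x0 x0_cl.
have [r0 [r0_gt0 oblique]] := oblique_penalty O_open rho_def n_def gamma_lip c0_gt0 gamma_n x0_cl.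
exact: (subsolution_le_obstacle_at_T (Rlt_le _ _ T_gt0) O_bounded rho_def psi_cont b_cont u_sub
  x0_cl r0_gt0 oblique).
Qed.
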